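(* Let $\chi_k$ be a sequence of irrigation patterns converging uniformly to an irrigation pattern $\chi$, and let $t_k\in I$ with $t_k\to t$. Then for $\mathbb P$-almost all $p\in\Gamma$, $$m_\chi(\chi(p,t))\ge\limsup_{k\to\infty}m_{\chi_k}(\chi_k(p,t_k)).$$
   Context: A reference space $(\Gamma,\mathcal B(\Gamma),\mathbb P)$ is a complete separable uncountable metric space with a positive finite atomless Borel measure $\mathbb P$. $I=[0,1]$. An irrigation pattern is a measurable $\chi:\Gamma\times I\to\mathbb{R}^n$ with $\chi_p=\chi(p,\cdot)$ absolutely continuous for $\mathbb P$-a.e. $p$. $\chi_k\to\chi$ uniformly means $\chi_k(p,\cdot)\to\chi(p,\cdot)$ uniformly on $I$ for $\mathbb P$-a.e. $p$. $m_\chi(x)=\mathbb P(\{q\in\Gamma:x\in\chi_q(I)\})$. *)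

From HB Require Import structures.
From mathcomp Require Import all_boot all_order all_algebra.
From mathcomp Require Import all_classical all_reals all_analysis.
Set Implicit Arguments.
Unset Strict Implicit.
Unset Printing Implicit Defensive.
Import Order.TTheory GRing.Theory Num.Theory.
Import numFieldNormedType.Exports.
Local Open Scope classical_set_scope.
Local Open Scope ring_scope.

Notation borel_of T := (g_sigma_algebraType (@open T)).

Section Defs.
Variable R : realType.

(* Reference space: (Gamma, B(Gamma), P) with Gamma a complete separable
   uncountable metric space and P a positive finite atomless Borel measure. *)
Definition reference_space (Gamma : completePseudoMetricType R)
    (P : {finite_measure set (borel_of Gamma) -> \bar R}) : Prop :=
  [/\ hausdorff_space Gamma,
      (exists D : set Gamma, countable D /\ dense D),
      ~ countable [set: Gamma],
      (0 < P [set: borel_of Gamma])%E &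
      (forall A : set (borel_of Gamma), measurable A -> (0 < P A)%E ->
         exists2 B : set (borel_of Gamma), measurable B /\ B `<=` A &
           (0 < P B)%E /\ (P B < P A)%E)].

Definition abs_continuous_on (n : nat) (a b : R) (f : R -> 'rV[R]_n) : Prop :=
  forall e : R, 0 < e -> exists2 d : R, 0 < d &
    forall (k : nat) (u v : nat -> R),
      (forall i, (i < k)%N -> a <= u i /\ u i <= v i /\ v i <= b) ->
      (forall i j, (i < k)%N -> (j < k)%N -> i <> j ->
          v i <= u j \/ v j <= u i) ->
      \sum_(0 <= i < k) (v i - u i) < d ->
      \sum_(0 <= i < k) `|f (v i) - f (u i)| < e.

(* An irrigation pattern chi : Gamma x I -> R^n (only values on I = [0,1]
   matter): jointly (Borel) measurable, and chi_p absolutely continuous on I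
   for P-a.e. p. Measurability into R^n is stated coordinatewise. *)
Definition irrigation_pattern (Gamma : completePseudoMetricType R) (n : nat)
    (P : {finite_measure set (borel_of Gamma) -> \bar R})
    (chi : Gamma -> R -> 'rV[R]_n) : Prop :=
  (forall i : 'I_n,
     measurable_fun (setT `*` `[0%R, 1%R] : set (borel_of Gamma * R)%type)
       (fun z : (borel_of Gamma * R)%type => chi z.1 z.2 ord0 i)) /\
  {ae P, forall p : borel_of Gamma, abs_continuous_on 0 1 (chi p)}.

(* m_chi(x) = P({q : x \in chi_q(I)}), P evaluated as outer measure
   (equal to the completed measure on P-measurable sets). *)
Definition m_of (Gamma : completePseudoMetricType R) (n : nat)
    (P : {finite_measure set (borel_of Gamma) -> \bar R})
    (chi : Gamma -> R -> 'rV[R]_n) (x : 'rV[R]_n) : \bar R :=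
  ereal_inf [set P A | A in [set A : set (borel_of Gamma) | measurable A /\
     [set q : borel_of Gamma | exists2 s, s \in `[0%R, 1%R] & chi q s = x]
       `<=` A]].

End Defs.

(* Fix p at which chi_p and every chi_{k,p} are absolutely continuous and
   chi_{k,p} -> chi_p uniformly; then y_k := chi_k(p, t_k) -> x := chi(p, t),
   and it suffices to show limsup_k m_{chi_k}(y_k) <= m_chi(x) for any y_k -> x.
   Let N be a null set off which this regularity holds at every q.  For q
   outside N, if chi_{k,q} passes through y_k and is eps-close to chi_q at all
   rational times, then chi_q comes within 3 eps of x at some rational time
   (absolute continuity of chi_{k,q} lets one move from the hitting time to a
   nearby rational one).  The points q where eps-closeness fails for some
   k >= j ([nonuniform_set eps j]) decrease in j into N, so the limsup is at
   most P(T_e), where T_e ([approx_hit e x]) is the set of q outside N such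
   that chi_q(r) is e-close to x for some rational r in [0, 1].  Restricting
   to rational times makes T_e measurable; as e -> 0 it decreases into
   {q | x \in chi_q([0, 1])} because chi_q([0, 1]) is compact, and continuity
   from above of the finite measure P concludes. *)

From HB Require Import structures.
From mathcomp Require Import all_boot all_order all_algebra.
From mathcomp Require Import all_classical all_reals all_analysis.
From mathcomp Require Import lra.
Import Order.TTheory GRing.Theory Num.Theory.
Import numFieldNormedType.Exports.
Local Open Scope classical_set_scope.
Local Open Scope ring_scope.
Set Implicit Arguments.
Unset Strict Implicit.

Section real_analysis.
Variables (R : realType) (n : nat).
Implicit Types (a b e : R) (f : R -> 'rV[R]_n).

Lemma rV_norm_ltP (v : 'rV[R]_n) e : 0 < e ->
  `|v| < e <-> forall i, `|v ord0 i| < e.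
Proof.
move=> e0; have -> : (`|v| < e) <-> ball (0 : 'rV[R]_n) e v.
  by rewrite mx_norm_ball /ball_ /= sub0r normrN.
split=> [[_ v_small] i|v_small].
  by have := v_small ord0 i; rewrite /ball /= mxE sub0r normrN.
by split=> // i j; rewrite (ord1 i) /ball /= mxE sub0r normrN.
Qed.

Lemma abs_continuous_on_uniform a b f : abs_continuous_on a b f ->
  forall e, 0 < e -> exists2 d : R, 0 < d & forall u v : R,
    u \in `[a, b] -> v \in `[a, b] -> `|v - u| < d -> `|f v - f u| < e.
Proof.
move=> fAC e e0; have [d d0 fd] := fAC e e0; exists d => // u v.
wlog uv : u v / u <= v.
  move=> W uI vI duv; have [uv|vu] := leP u v; first exact: W.
  by rewrite distrC W 1?distrC // ltW.
rewrite !in_itv /= => /andP[au ub] /andP[av vb] duv.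
have := fd 1%N (fun=> u) (fun=> v); rewrite !big_nat1; apply.
- by move=> i _; do !split.
- by move=> i j; rewrite !ltnS !leqn0 => /eqP -> /eqP ->.
- by rewrite ger0_norm ?subr_ge0 in duv.
Qed.

Lemma abs_continuous_on_image_closed a b f (x : 'rV[R]_n) :
  abs_continuous_on a b f ->
  (forall m : nat, exists2 s, s \in `[a, b] & `|f s - x| < m.+1%:R^-1) ->
  exists2 s, s \in `[a, b] & f s = x.
Proof.
move=> fAC near_x.
have /choice[s sP] : forall m : nat,
    exists s, s \in `[a, b] /\ `|f s - x| < m.+1%:R^-1.
  by move=> m; have [s ? ?] := near_x m; exists s.
have [c [cI c_cluster]] : `[a, b] `&` cluster (s @ \oo) !=set0.
  by apply: segment_compact; exists 0%N => // m _ /=; have := (sP m).1; rewrite inE.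
exists c; first by rewrite inE.
have fc_near_x e : 0 < e -> `|f c - x| < e.
  move=> e0; have e20 : 0 < e / 2 by rewrite divr_gt0.
  have [d d0 fd] := abs_continuous_on_uniform fAC e20.
  have [M Me] := ltr_add_invr e20; rewrite add0r in Me.
  have [y [[m /= Mm <-] smc]] :
      s @` [set m | (M <= m)%N] `&` ball c d !=set0.
    apply: c_cluster; last exact: nbhsx_ballx.
    by exists M => // m /= Mm; exists m.
  have fsm_near_fc : `|f c - f (s m)| < e / 2.
    by apply: fd; [case: (sP m) | rewrite inE | exact: smc].
  have fsm_near_x : `|f (s m) - x| < e / 2.
    apply: lt_le_trans (sP m).2 (le_trans _ (ltW Me)).
    by rewrite lef_pV2 ?posrE // ler_nat.
  rewrite -(subrK (f (s m)) (f c)) -addrA [e]splitr.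
  by apply: le_lt_trans (ler_normD _ _) _; rewrite ltrD.
apply/eqP; rewrite -subr_eq0 -normr_le0 leNgt; apply/negP => fcx_gt0.
by have := fc_near_x _ fcx_gt0; rewrite ltxx.
Qed.

Lemma cvg_uniform_norm (A : set R) (F : nat -> R -> 'rV[R]_n) f :
  {uniform A, F @ \oo --> f} -> forall e, 0 < e ->
  \forall k \near \oo, forall s, s \in A -> `|f s - F k s| < e.
Proof.
move=> Ff e e0.
have [|N _ FNf] := Ff [set g | forall s, s \in A -> ball (f s) e (g s)].
  apply/uniform_nbhs; exists [set xy | ball xy.1 e xy.2]; split.
    exact: (entourage_ball _ (PosNum e0)).
  by move=> g /= fg s; rewrite inE; exact: fg.
by exists N => // k Nk s sA; have := FNf k Nk s sA; rewrite -ball_normE.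
Qed.

Lemma cvg_uniform_eval a b (F : nat -> R -> 'rV[R]_n) f (tk : nat -> R) t :
  {uniform `[a, b], F @ \oo --> f} -> abs_continuous_on a b f ->
  (forall k, tk k \in `[a, b]) -> t \in `[a, b] -> tk @ \oo --> t ->
  F k (tk k) @[k --> \oo] --> f t.
Proof.
move=> Ff fAC tkI tI tkt; apply/cvgrPdist_lt => e e0.
have e20 : 0 < e / 2 by rewrite divr_gt0.
have [d d0 fd] := abs_continuous_on_uniform fAC e20.
have tk_near_t := (cvgrPdist_lt _ _).1 tkt d d0.
near=> k.
rewrite -(subrK (f (tk k)) (f t)) -addrA [e]splitr.
apply: le_lt_trans (ler_normD _ _) _; rewrite ltrD //.
  by apply: fd => //; near: k; exact: tk_near_t.
near: k; apply: filterS (cvg_uniform_norm Ff e20) => k; apply.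
by rewrite inE; exact: tkI.
Unshelve. all: by end_near.
Qed.

Lemma ratr_near_itv01 (s d : R) : s \in `[0, 1] -> 0 < d ->
  exists2 r : rat, (ratr r : R) \in `[0, 1] & `|s - ratr r| < d.
Proof.
rewrite in_itv /= => /andP[s0 s1] d0.
pose m := Num.min d (1 / 2 : R).
have m0 : 0 < m by rewrite lt_min d0 divr_gt0.
have md : m <= d by rewrite ge_min lexx.
have m2 : m <= 1 / 2 by rewrite ge_min lexx orbT.
have [s_small|s_large] := leP s (1 / 2).
  have [r] : exists r : rat, ratr r \in `]s, s + m[.
    by apply: rat_in_itvoo; rewrite ltrDl.
  rewrite in_itv /= => /andP[sr rsm]; exists r.
    by rewrite in_itv /=; apply/andP; split; lra.
  by rewrite ltr0_norm ?subr_lt0 //; lra.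
have [r] : exists r : rat, ratr r \in `]s - m, s[.
  by apply: rat_in_itvoo; rewrite ltrBlDr ltrDl.
rewrite in_itv /= => /andP[smr rs]; exists r.
  by rewrite in_itv /=; apply/andP; split; lra.
by rewrite gtr0_norm ?subr_gt0 //; lra.
Qed.

Lemma limn_esup_le_near (u : (\bar R)^nat) (c : \bar R) :
  (\forall k \near \oo, (u k <= c)%E) -> (limn_esup u <= c)%E.
Proof.
move=> [N _ uNc]; rewrite limn_esup_lim; apply: lime_le; first exact: is_cvg_esups.
exists N => // m /= Nm; apply: ge_ereal_sup => _ [k /= mk <-].
exact: uNc (leq_trans Nm mk).
Qed.

End real_analysis.

Section measurability.
Variables (R : realType) (d1 d2 d3 : measure_display).
Variables (T1 : measurableType d1) (T2 : measurableType d2) (T3 : measurableType d3).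

Lemma measurable_fun_pair1_in (D : set T2) (f : T1 * T2 -> T3) y :
  measurable D -> measurable_fun (setT `*` D) f -> y \in D ->
  measurable_fun setT (fun x => f (x, y)).
Proof.
move=> mD mf yD _ Y mY; rewrite setTI.
have := measurable_ysection y (mf (measurableX measurableT mD) Y mY).
congr measurable; apply/seteqP; split => x /=.
  by rewrite /ysection /= inE => -[].
by move=> Yx; rewrite /ysection /= inE; split => //; split => //=; rewrite -inE.
Qed.

Lemma measurable_norm_lt n (g : T1 -> 'rV[R]_n) (e : R) :
  (forall i, measurable_fun setT (fun q => g q ord0 i)) ->
  measurable [set q | `|g q| < e].
Proof.
move=> mg; have [e0|e_le0] := ltP 0 e; last first.
  rewrite (_ : [set q | _] = set0) //; apply/seteqP; split => q //=.
  by move=> /lt_le_trans /(_ e_le0); rewrite normr_lt0.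
rewrite (_ : [set q | _] =
    \bigcap_(i in [set: 'I_n]) (fun q => g q ord0 i) @^-1` ball 0 e).
  apply: fin_bigcap_measurable; first exact: finite_finset.
  move=> i _; rewrite -[X in measurable X]setTI.
  by apply: mg => //; rewrite ball_itv; exact: measurable_itv.
apply/seteqP; split => q /=.
  by move/(rV_norm_ltP (g q) e0) => gq_small i _; rewrite /ball /= sub0r normrN.
move=> gq_small; apply/(rV_norm_ltP (g q) e0) => i.
by have := gq_small i I; rewrite /ball /= sub0r normrN.
Qed.

Lemma measurable_dist_lt n (g1 g2 : T1 -> 'rV[R]_n) (e : R) :
  (forall i, measurable_fun setT (fun q => g1 q ord0 i)) ->
  (forall i, measurable_fun setT (fun q => g2 q ord0 i)) ->
  measurable [set q | `|g1 q - g2 q| < e].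
Proof.
move=> mg1 mg2; apply: (measurable_norm_lt (g := fun q => g1 q - g2 q)) => i.
under eq_fun do rewrite !mxE.
exact: measurable_realfun.measurable_funB.
Qed.

End measurability.

Section upper_semicontinuity.
Variables (R : realType) (Gamma : completePseudoMetricType R).
Variables (P : {finite_measure set (borel_of Gamma) -> \bar R}) (n : nat).
Variables (chik : nat -> Gamma -> R -> 'rV[R]_n) (chi : Gamma -> R -> 'rV[R]_n).
Local Notation Omega := (borel_of Gamma).

Hypothesis measurable_chik : forall k i,
  measurable_fun (setT `*` `[0%R, 1%R] : set (Omega * R)%type)
    (fun z : (Omega * R)%type => chik k z.1 z.2 ord0 i).
Hypothesis measurable_chi : forall i,
  measurable_fun (setT `*` `[0%R, 1%R] : set (Omega * R)%type)
    (fun z : (Omega * R)%type => chi z.1 z.2 ord0 i).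

Variable N : set Omega.
Hypotheses (mN : measurable N) (PN0 : P N = 0%E).
Hypothesis chi_abs_continuous : forall q, ~ N q -> abs_continuous_on 0 1 (chi q).
Hypothesis chik_abs_continuous : forall q k, ~ N q -> abs_continuous_on 0 1 (chik k q).
Hypothesis chik_ucvg : forall q, ~ N q ->
  {uniform `[0%R, 1%R], (fun k => chik k q) @ \oo --> chi q}.

Let measurable_chik_at k s : s \in `[0, 1] -> forall i,
  measurable_fun setT (fun q : Omega => chik k q s ord0 i).
Proof.
by move=> sI i; apply: measurable_fun_pair1_in (measurable_chik k i) _;
  rewrite ?inE.
Qed.

Let measurable_chi_at s : s \in `[0, 1] -> forall i,
  measurable_fun setT (fun q : Omega => chi q s ord0 i).
Proof.
by move=> sI i; apply: measurable_fun_pair1_in (measurable_chi i) _;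
  rewrite ?inE.
Qed.

Definition approx_hit (e : R) (x : 'rV[R]_n) : set Omega :=
  ~` N `&` \bigcup_(r : rat) (if (ratr r : R) \in `[0, 1]
    then [set q | `|chi q (ratr r) - x| < e] else set0).

Definition nonuniform_set (e : R) (j : nat) : set Omega :=
  N `|` \bigcup_k \bigcup_(r : rat) (if (j <= k)%N && ((ratr r : R) \in `[0, 1])
    then ~` [set q | `|chik k q (ratr r) - chi q (ratr r)| < e] else set0).

Lemma measurable_approx_hit e x : measurable (approx_hit e x).
Proof.
apply: measurableI; first exact: measurableC.
apply: bigcupT_measurable_rat => r; case: ifP => rI; last exact: measurable0.
apply: measurable_dist_lt (measurable_chi_at rI) _ => i.
exact: measurable_cst.
Qed.

Lemma measurable_nonuniform_set e j : measurable (nonuniform_set e j).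
Proof.
apply: measurableU => //; apply: bigcupT_measurable => k.
apply: bigcupT_measurable_rat => r; case: ifP => [/andP[_ rI]|_].
  apply/measurableC/measurable_dist_lt; first exact: measurable_chik_at.
  exact: measurable_chi_at.
exact: measurable0.
Qed.

Lemma nonincreasing_nonuniform_set e : nonincreasing_seq (nonuniform_set e).
Proof.
move=> j j' jj'; apply/subsetPset => q [Nq|[k _ [r _]]]; first by left.
case: ifP => [/andP[jk rI] far|//]; right; exists k => //; exists r => //.
by rewrite rI (leq_trans jj' jk).
Qed.

Lemma bigcap_nonuniform_set e : 0 < e -> \bigcap_j nonuniform_set e j `<=` N.
Proof.
move=> e0 q qbad; apply: contrapT => Nq.
have [J _ chik_near] := cvg_uniform_norm (chik_ucvg Nq) e0.
case: (qbad J I) => // -[k _ [r _]].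
case: ifP => [/andP[Jk rI]|//] /= []; rewrite distrC.
by apply: chik_near Jk _ _; rewrite inE.
Qed.

Lemma cvg_measure_nonuniform_set e : 0 < e ->
  (P \o nonuniform_set e @ \oo --> 0)%E.
Proof.
move=> e0; have mcap := bigcapT_measurable (measurable_nonuniform_set e).
rewrite -(subset_measure0 mcap mN (bigcap_nonuniform_set e0) PN0).
apply: nonincreasing_cvg_mu => //; last exact: nonincreasing_nonuniform_set.
  by rewrite ltey_eq fin_num_measure //; exact: measurable_nonuniform_set.
exact: measurable_nonuniform_set.
Qed.

Lemma subset_approx_hit e e' x : e <= e' -> approx_hit e x `<=` approx_hit e' x.
Proof.
move=> ee' q [Nq [r _ qr]]; split => //; exists r => //; move: qr.
by case: ifP => //= _ close; exact: lt_le_trans close ee'.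
Qed.

Lemma hit_sub_approx_hit eps j k (x y : 'rV[R]_n) : 0 < eps -> (j <= k)%N ->
  `|x - y| < eps ->
  [set q | exists2 s, s \in `[0, 1] & chik k q s = y] `<=`
    approx_hit (eps *+ 3) x `|` nonuniform_set eps j.
Proof.
move=> eps0 jk xy q [s sI chiks].
have [Nq|Nq] := pselect (N q); first by right; left.
have [d d0 chikd] := abs_continuous_on_uniform (chik_abs_continuous k Nq) eps0.
have [r rI rs] := ratr_near_itv01 sI d0.
have [close|far] := pselect (`|chik k q (ratr r) - chi q (ratr r)| < eps).
  left; split => //; exists r => //; rewrite rI /=.
  have chikr_near_y : `|chik k q (ratr r) - y| < eps.
    by rewrite -chiks; apply: chikd => //; rewrite distrC.
  have -> : chi q (ratr r) - x = (chi q (ratr r) - chik k q (ratr r)) +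
      (chik k q (ratr r) - y) + (y - x) by rewrite !addrA !subrK.
  apply: le_lt_trans (ler_normD _ _) _.
  apply: le_lt_trans (lerD (ler_normD _ _) (lexx _)) _.
  rewrite distrC in close; rewrite distrC in xy; lra.
by right; right; exists k => //; exists r => //; rewrite jk rI.
Qed.

Lemma m_of_le_approx_hit eps j k (x y : 'rV[R]_n) : 0 < eps -> (j <= k)%N ->
  `|x - y| < eps ->
  (m_of P (chik k) y <= P (approx_hit (eps *+ 3) x) + P (nonuniform_set eps j))%E.
Proof.
move=> eps0 jk xy.
apply: le_trans (measureU2 P (measurable_approx_hit _ _)
  (measurable_nonuniform_set _ _)).
apply: ereal_inf_lbound.
exists (approx_hit (eps *+ 3) x `|` nonuniform_set eps j) => //.
split; last exact: hit_sub_approx_hit.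
exact: measurableU (measurable_approx_hit _ _) (measurable_nonuniform_set _ _).
Qed.

Lemma limn_esup_m_of_le_approx_hit (y_ : nat -> 'rV[R]_n) x e :
  y_ @ \oo --> x -> 0 < e ->
  (limn_esup (fun k => m_of P (chik k) (y_ k)) <= P (approx_hit e x))%E.
Proof.
move=> yx e0; pose eps := e / 3; have eps0 : 0 < eps by rewrite divr_gt0.
have -> : e = eps *+ 3 by rewrite /eps; lra.
have bound j : (limn_esup (fun k => m_of P (chik k) (y_ k)) <=
    P (approx_hit (eps *+ 3) x) + P (nonuniform_set eps j))%E.
  apply: limn_esup_le_near; near=> k; apply: m_of_le_approx_hit => //.
    by near: k; exists j.
  by near: k; exact: (cvgrPdist_lt _ _).1 yx _ eps0.
have cvg_bound : ((fun j => P (approx_hit (eps *+ 3) x) + P (nonuniform_set eps j))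
    @ \oo --> P (approx_hit (eps *+ 3) x) + 0)%E.
  apply: cvgeD; last exact: cvg_measure_nonuniform_set.
    by rewrite fin_num_adde_defl // fin_num_measure //; exact: measurable_approx_hit.
  exact: cvg_cst.
rewrite -[P (approx_hit _ x)]adde0 -(cvg_lim _ cvg_bound) //.
by apply: lime_ge; [exact: cvgP cvg_bound | exact: nearW].
Unshelve. all: by end_near.
Qed.

Lemma bigcap_approx_hit x : \bigcap_m approx_hit m.+1%:R^-1 x `<=`
  [set q | exists2 s, s \in `[0, 1] & chi q s = x].
Proof.
move=> q qnear; have [Nq _] := qnear 0%N I.
apply: abs_continuous_on_image_closed (chi_abs_continuous Nq) _ => m.
by have [_ [r _]] := qnear m I; case: ifP => // rI /=; exists (ratr r).
Qed.

Lemma limn_esup_m_of_le (y_ : nat -> 'rV[R]_n) x : y_ @ \oo --> x ->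
  (limn_esup (fun k => m_of P (chik k) (y_ k)) <= m_of P chi x)%E.
Proof.
move=> yx; apply/ereal_infP => _ [A [mA hitA] <-].
pose T m := approx_hit m.+1%:R^-1 x.
have mT m : measurable (T m) by exact: measurable_approx_hit.
have mcapT : measurable (\bigcap_m T m) by exact: bigcapT_measurable.
have PT : (P \o T @ \oo --> P (\bigcap_m T m))%E.
  apply: nonincreasing_cvg_mu => //.
    by rewrite ltey_eq fin_num_measure.
  move=> m m' mm'; apply/subsetPset/subset_approx_hit.
  by rewrite lef_pV2 ?posrE // ler_nat.
have PcapA : (P (\bigcap_m T m) <= P A)%E.
  apply: le_measure; rewrite ?inE //.
  by move=> q /bigcap_approx_hit; exact: hitA.
apply: le_trans PcapA.
rewrite -(cvg_lim _ PT) //; apply: lime_ge; first exact: cvgP PT.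
by apply: nearW => m; apply: limn_esup_m_of_le_approx_hit.
Qed.

End upper_semicontinuity.

Unset Implicit Arguments.
Set Strict Implicit.

Theorem mainTheorem13 (R : realType) (Gamma : completePseudoMetricType R)
  (P : {finite_measure set (borel_of Gamma) -> \bar R}) (n : nat)
  (chik : nat -> Gamma -> R -> 'rV[R]_n) (chi : Gamma -> R -> 'rV[R]_n)
  (tk : nat -> R) (t : R) :
  reference_space P ->
  (forall k, irrigation_pattern P (chik k)) ->
  irrigation_pattern P chi ->
  {ae P, forall p : borel_of Gamma,
     {uniform `[0%R, 1%R], (fun k => chik k p) @ \oo --> chi p}} ->
  (forall k, tk k \in `[0%R, 1%R]) ->
  tk @ \oo --> t ->
  {ae P, forall p : borel_of Gamma,
     (limn_esup (fun k => m_of P (chik k) (chik k p (tk k)))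
        <= m_of P chi (chi p t))%E}.
Proof.
move=> _ chik_pattern [measurable_chi chi_AC] chik_ucvg tkI tkt.
have chik_AC := ae_foralln (fun k => (chik_pattern k).2).
pose good_at p := [/\ abs_continuous_on 0 1 (chi p),
  forall k, abs_continuous_on 0 1 (chik k p) &
  {uniform `[0%R, 1%R], (fun k => chik k p) @ \oo --> chi p}].
have [N [mN PN0 bad_sub_N]] : {ae P, forall p : borel_of Gamma, good_at p}.
  exact: (filterS2 _ (fun p a (b : _ /\ _) => And3 a b.1 b.2) chi_AC
    (filterS2 _ (fun p a b => conj a b) chik_AC chik_ucvg)).
have off_N q : ~ N q -> good_at q.
  by move=> Nq; apply: contrapT => /bad_sub_N.
exists N; split => // p; apply: contra_notP => /off_N[chip_AC _ chip_ucvg].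
have tI : `[0%R, 1%R]%classic t.
  exact: closed_cvg _ (@itv_closed _ R 0 1) (nearW _ tkI) _ tkt.
apply: (limn_esup_m_of_le (fun k => (chik_pattern k).1) measurable_chi mN PN0).
- by move=> q /(off_N q)[].
- by move=> q k /(off_N q)[_ chikq_AC _]; exact: chikq_AC.
- by move=> q /(off_N q)[].
- exact: cvg_uniform_eval chip_ucvg chip_AC tkI tI tkt.
Qed.
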